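(* Let $\mu$ be a nonempty Young diagram, $p=\mu_1-1$ and $q=\mu'_1-1$. Then $s_{\mu;a}$ depends only on the $p+q$ parameters $a_1,\dots,a_p$ and $\widehat a_1,\dots,\widehat a_q$, i.e. on $a_i$ for $1-q\le i\le p$: if two sequences $a,b$ satisfy $a_i=b_i$ for all $1-q\le i\le p$, then $s_{\mu;a}=s_{\mu;b}$.
   Context: $\Lambda$ is the algebra of symmetric functions over $\mathbb C$ with complete homogeneous $h_k$ and elementary $e_k$. For a sequence $a=(a_i)_{i\in\mathbb Z}$ of complex numbers define $h_{k;a}=\sum_{i=1}^k(-1)^{k-i}e_{k-i}(a_1,\dots,a_{k-1})h_i$ for $k\ge1$, $h_{0;a}=1$, $h_{k;a}=0$ for $k<0$; let $(\tau^ra)_i=a_{i+r}$; and set $s_{\mu;a}=\det[h_{\mu_i-i+j;\,\tau^{1-j}a}]_{i,j=1}^N$ for any $N\ge\ell(\mu)$. The dual sequence is $\widehat a_i=-a_{1-i}$, so $(\widehat a_1,\dots,\widehat a_q)=(-a_0,-a_{-1},\dots,-a_{1-q})$. $\mu'$ is the transposed diagram. *)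

From mathcomp Require Import all_boot all_algebra.
From mathcomp Require Import Rstruct complex.
Set Implicit Arguments. Unset Strict Implicit. Unset Printing Implicit Defensive.
Import GRing.Theory.
Local Open Scope ring_scope.

Notation CC := (Rdefinitions.R[i]).

Definition esym_eval (m j : nat) (x : 'I_m -> CC) : CC :=
  \sum_(S : {set 'I_m} | #|S| == j) \prod_(i in S) x i.

Definition tau (r : int) (a : int -> CC) : int -> CC := fun i => a (i + r).

Definition hfac (A : comAlgType CC) (h : nat -> A) (a : int -> CC) (k : int) : A :=
  match k with
  | Posz 0 => 1
  | Posz k' =>
      \sum_(1 <= i < k'.+1)
        (((-1) ^+ (k' - i)%N * esym_eval (k' - i)%N
             (fun m : 'I_(k'.-1) => a (Posz m.+1))) *: h i)
  | Negz _ => 0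
  end.

(* mu_i (1-based), as an int *)
Definition part (mu : seq nat) (i : nat) : int := Posz (nth 0%N mu i.-1).

Definition fschur (A : comAlgType CC) (h : nat -> A) (mu : seq nat)
    (a : int -> CC) (N : nat) : A :=
  \det (\matrix_(i < N, j < N)
          hfac h (tau (1 - Posz j.+1) a)
               (part mu i.+1 - Posz i.+1 + Posz j.+1)).

Definition is_partition (mu : seq nat) : bool :=
  sorted geq mu && all (fun x => 0 < x)%N mu.

(* mu'_1 = number of boxes in the first column *)
Definition conj1 (mu : seq nat) : nat := count (fun x => 0 < x)%N mu.

From mathcomp Require Import all_boot all_algebra.
From mathcomp Require Import Rstruct complex.
From mathcomp Require Import zify.

Set Implicit Arguments.
Unset Strict Implicit.
Unset Printing Implicit Defensive.
Import GRing.Theory.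
Local Open Scope ring_scope.

(* The entry (i, j) of the N x N matrix is h_{k; tau^{1-j} a} with
   k = mu_i - i + j, and h_{k;c} only involves c_1, ..., c_{k-1}, i.e. the
   values a_n with 2 - j <= n <= mu_i - i <= mu_1 - 1.  So the determinant of
   size N depends on a only through the window 2 - N <= n <= mu_1 - 1.
   Moreover s_{mu;a} does not depend on N >= l(mu), since for N > l(mu) the
   last row is (0, ..., 0, h_0 = 1); taking N = l(mu) = mu'_1 gives the
   window 1 - q <= n <= p. *)

Lemma eq_esym_eval m j (x y : 'I_m -> CC) :
  x =1 y -> esym_eval j x = esym_eval j y.
Proof. by move=> eq_xy; apply: eq_bigr => S _; apply: eq_bigr. Qed.

Lemma eq_hfac (A : comAlgType CC) (h : nat -> A) (c c' : int -> CC) (k : int) :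
  (forall n : int, 0 < n < k -> c n = c' n) -> hfac h c k = hfac h c' k.
Proof.
case: k => [[|k]|k] //= eq_cc'.
apply: eq_bigr => i _; congr (_ * _ *: _); apply: eq_esym_eval => m.
by apply: eq_cc'; have := ltn_ord m; lia.
Qed.

Lemma hfac_lt0 (A : comAlgType CC) (h : nat -> A) (c : int -> CC) (k : int) :
  k < 0 -> hfac h c k = 0.
Proof. by case: k => [[|k]|k]. Qed.

Lemma fschurS (A : comAlgType CC) (h : nat -> A) (mu : seq nat)
    (a : int -> CC) N :
  (size mu <= N)%N -> fschur h mu a N.+1 = fschur h mu a N.
Proof.
move=> le_mu_N; rewrite /fschur (expand_det_row _ ord_max) big_ord_recr /=.
have part_N1 : part mu N.+1 = 0 by rewrite /part nth_default.
rewrite big1 ?add0r => [|j _]; last first.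
  by rewrite !mxE part_N1 hfac_lt0 ?mul0r //=; have := ltn_ord j; lia.
rewrite !mxE part_N1 add0r addNr mul1r /cofactor addnn.
rewrite -signr_odd odd_double expr0 mul1r.
by congr (\det _); apply/matrixP => i j; rewrite !mxE !lift_max.
Qed.

Lemma fschur_size (A : comAlgType CC) (h : nat -> A) (mu : seq nat)
    (a : int -> CC) N :
  (size mu <= N)%N -> fschur h mu a N = fschur h mu a (size mu).
Proof.
elim: N => [|N IHN]; first by rewrite leqn0 => /eqP ->.
rewrite leq_eqVlt => /orP[/eqP -> // | lt_mu_N1].
by rewrite fschurS // IHN.
Qed.

Lemma sorted_geq_nth_head {s : seq nat} i :
  sorted geq s -> (nth 0 s i <= head 0 s)%N.
Proof.
move=> sorted_s; have [lt_i_s | le_s_i] := ltnP i (size s); last first.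
  by rewrite nth_default.
rewrite -nth0; apply: (sorted_leq_nth (rev_trans leq_trans) leqnn) => //.
by rewrite inE (leq_ltn_trans _ lt_i_s).
Qed.

Lemma eq_fschur_window (A : comAlgType CC) (h : nat -> A) (mu : seq nat)
    (a b : int -> CC) N :
  sorted geq mu ->
  (forall n : int, 2 - Posz N <= n <= Posz (head 0%N mu) - 1 -> a n = b n) ->
  fschur h mu a N = fschur h mu b N.
Proof.
move=> sorted_mu eq_ab; congr (\det _); apply/matrixP => i j; rewrite !mxE.
apply: eq_hfac => n /andP[n_gt0 n_lt]; apply: eq_ab.
have := sorted_geq_nth_head i.+1.-1 sorted_mu; have := ltn_ord j.
move: n_gt0 n_lt; rewrite /part /=; lia.
Qed.

Lemma conj1_partition (mu : seq nat) : is_partition mu -> conj1 mu = size mu.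
Proof. by case/andP=> _ mu_gt0; apply/eqP; rewrite -all_count. Qed.

Theorem corollary8 (A : comAlgType CC) (h : nat -> A) (mu : seq nat)
    (a b : int -> CC) :
  is_partition mu -> mu != [::] ->
  let p := ((head 0%N mu).-1) in
  let q := ((conj1 mu).-1) in
  (forall i : int, 1 - Posz q <= i <= Posz p -> a i = b i) ->
  forall N : nat, (size mu <= N)%N -> fschur h mu a N = fschur h mu b N.
Proof.
move=> mu_partition mu_neq0 /= eq_ab N le_mu_N.
rewrite !(fschur_size _ _ le_mu_N).
have size_gt0 : (0 < size mu)%N by rewrite lt0n size_eq0.
have head_gt0 : (0 < head 0 mu)%N.
  by case/andP: mu_partition => _ /allP; apply; rewrite -nth0 mem_nth.
apply: eq_fschur_window; first by case/andP: mu_partition.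
move=> n n_window; apply: eq_ab.
by move: n_window; rewrite conj1_partition //; lia.
Qed.
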